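(* Let $f^0$ be $f$ with $\gamma_{\rm P}$ replaced by $0$. Then $f^0$ has a unique maximiser $(z^{Q,\star}(0),z^{S,\star}(0))$, which is the limit as $\gamma_{\rm P}\downarrow0$ of the maximiser of $f$. Setting $s^0_{i,n}=z^{S,i,\star}(0)$ and $q^0_{i,j,n}=\nu_jz^{Q,i,j,\star}(0)$, for all $i,j$: $$q^0_{i,j,n}=-\frac{\sigma}{\sqrt n}s^0_{i,n}\rho_j\ (j\ne i),\qquad q^0_{i,i,n}=\frac1{A_i}\Big(\frac1{c_i\nu_i}-\frac{\gamma_i\sigma}{\sqrt n}\rho_is^0_{i,n}\Big),\qquad s^0_{i,n}=-\frac{\sqrt n}{\sigma}\frac{\rho_i}{A_ic_i\nu_i(n-\pi_{i,n})},$$ where $A_i=\gamma_i+\frac{1}{c_i\nu_i^2}$ and $\pi_{i,n}=\|\rho\|^2-\rho_i^2+\frac{\gamma_i}{A_i}\rho_i^2\in[0,n)$. In particular $\mathrm{sgn}(s^0_{i,n})=-\mathrm{sgn}(\rho_i)$, $z^{Q,i,i,\star}(0)>0$ for all $i$, and $\mathrm{sgn}(z^{Q,i,j,\star}(0))=\mathrm{sgn}(\rho_i\rho_j)$ for $j\ne i$.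
   Context: Fix an integer $n\ge1$ and parameters $\sigma>0$, $\gamma_{\rm P}>0$, and for each $i\in\{1,\dots,n\}$: $c_i>0$, $\gamma_i>0$, $\nu_i>0$, $\rho_i\in(-1,1)$. Write $\nu=(\nu_1,\dots,\nu_n)^\top$, $\rho=(\rho_1,\dots,\rho_n)^\top$, $\|\rho\|$ its Euclidean norm. The variables are a matrix $z^Q=(z^{Q,i,j})_{i,j}\in\mathbb{R}^{n\times n}$ ($i$ row, $j$ column) and a vector $z^S=(z^{S,1},\dots,z^{S,n})^\top\in\mathbb{R}^n$. Define $f:\mathbb{R}^{n\times n}\times\mathbb{R}^n\to\mathbb{R}$ by $$f(z^Q,z^S)=-\frac1n\sum_{i=1}^n\Big(\frac{(z^{Q,i,i})^2}{2c_i}+\frac{\gamma_i}{2}\sum_{j=1}^n\nu_j^2(z^{Q,i,j})^2+\frac{\gamma_i\sigma^2}{2}(z^{S,i})^2+\frac{\gamma_i\sigma}{\sqrt n}z^{S,i}\sum_{j=1}^n\rho_j\nu_jz^{Q,i,j}-\frac{z^{Q,i,i}}{c_i}\Big)-\frac{\gamma_{\rm P}}{2n^2}\sum_{i=1}^n\Big(\Big(\nu_i-\nu_i\sum_{j=1}^nz^{Q,j,i}-\frac{\rho_i\sigma}{\sqrt n}\sum_{j=1}^nz^{S,j}\Big)^2+\frac{(1-\rho_i^2)\sigma^2}{n}\Big(\sum_{j=1}^nz^{S,j}\Big)^2\Big).$$ For $\gamma_{\rm P}>0$, $f$ has a unique global maximiser. *)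

From HB Require Import structures.
From mathcomp Require Import all_boot all_order all_algebra.
From mathcomp Require Import all_classical all_reals all_analysis.
Set Implicit Arguments. Unset Strict Implicit. Unset Printing Implicit Defensive.
Import Order.TTheory GRing.Theory Num.Theory.
Local Open Scope ring_scope.

(* The objective f.  Variables: zQ : 'M_n (zQ i j = z^{Q,i,j}, i row, j column),
   zS : 'cV_n (zS i 0 = z^{S,i}).  gP is gamma_P. *)
Definition fobj (R : realType) (n : nat) (sigma gP : R)
  (c gam nu rho : 'I_n -> R) (zQ : 'M[R]_n) (zS : 'cV[R]_n) : R :=
  let sn := Num.sqrt (n%:R : R) in
  let sumS := \sum_(j < n) zS j 0 in
  - (n%:R)^-1 * \sum_(i < n)
      ( (zQ i i) ^+ 2 / (2 * c i)
      + gam i / 2 * \sum_(j < n) (nu j) ^+ 2 * (zQ i j) ^+ 2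
      + gam i * sigma ^+ 2 / 2 * (zS i 0) ^+ 2
      + gam i * sigma / sn * zS i 0 * \sum_(j < n) rho j * nu j * zQ i j
      - zQ i i / c i )
  - gP / (2 * (n%:R) ^+ 2) * \sum_(i < n)
      ( (nu i - nu i * \sum_(j < n) zQ j i - rho i * sigma / sn * sumS) ^+ 2
      + (1 - (rho i) ^+ 2) * sigma ^+ 2 / n%:R * sumS ^+ 2 ).

Definition is_maximiser (R : realType) (n : nat)
  (F : 'M[R]_n -> 'cV[R]_n -> R) (zQ : 'M[R]_n) (zS : 'cV[R]_n) : Prop :=
  forall (yQ : 'M[R]_n) (yS : 'cV[R]_n), F yQ yS <= F zQ zS.

From HB Require Import structures.
From mathcomp Require Import all_boot all_order all_algebra.
From mathcomp Require Import all_classical all_reals all_analysis.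
From mathcomp Require Import ring lra.
Import Order.TTheory GRing.Theory Num.Theory.
Import numFieldNormedType.Exports.
Local Open Scope ring_scope.
Local Open Scope classical_set_scope.
Set Implicit Arguments. Unset Strict Implicit. Unset Printing Implicit Defensive.

(* Without the penalty, f^0 = -(1/n) sum_i g_i splits into one quadratic g_i per
   row (z^{Q,i,.}, z^{S,i}).  The first-order conditions of g_i are solved in closed
   form: the q-equations express q^0 through s^0, and substituting them into the
   s-equation leaves a scalar equation with coefficient n - pi_{i,n} > 0.  At this
   critical point g_i(y) - g_i(z^0) is the quadratic part of g_i evaluated at y - z^0;
   completing the square and using ||rho||^2 < n, it dominates every squared
   coordinate of y - z^0.  Hence |y - z^0|^2 <= K (f^0(z^0) - f^0(y)) for some K > 0.
   This quadratic growth gives uniqueness, and since f = f^0 - gamma_P H with H >= 0,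
   every maximiser z of f satisfies |z - z^0|^2 <= K gamma_P H(z^0). *)

Section QuadraticGrowth.
Variables (R : realType) (V : normedModType R) (F0 : V -> R) (z0 : V) (K : R).
Hypotheses (K_gt0 : 0 < K) (growth : forall y, `|y - z0| ^+ 2 <= K * (F0 z0 - F0 y)).

Lemma growth_le y : F0 y <= F0 z0.
Proof.
by rewrite -subr_ge0 -(pmulr_rge0 _ K_gt0) (le_trans _ (growth y)) ?sqr_ge0.
Qed.

Lemma growth_eq y : F0 z0 <= F0 y -> y = z0.
Proof.
move=> le_z0y; apply/eqP; rewrite -subr_eq0 -normr_eq0 -sqrf_eq0 eq_le sqr_ge0.
by rewrite andbT (le_trans (growth y)) // pmulr_rle0 // subr_le0.
Qed.

Lemma penalized_maximisers_cvg (H : V -> R) (z : R -> V) :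
  (forall y, 0 <= H y) ->
  (forall g, 0 < g -> forall y, F0 y - g * H y <= F0 (z g) - g * H (z g)) ->
  z @ 0^'+ --> z0.
Proof.
move=> H_ge0 z_max.
have dist_le g : 0 < g -> `|z0 - z g| ^+ 2 <= K * H z0 * g.
  move=> g_gt0; rewrite distrC (le_trans (growth _)) // -mulrA ler_pM2l //.
  have := z_max g g_gt0 z0; have := H_ge0 (z g); nra.
have KH_ge0 : 0 <= K * H z0 by rewrite mulr_ge0 // ltW.
apply/cvgrPdist_lt => e e_gt0.
have b_gt0 : 0 < e ^+ 2 / (K * H z0 + 1) by rewrite divr_gt0 ?exprn_gt0 ?ltr_wpDl.
near=> g.
have g_gt0 : 0 < g by near: g; exact: nbhs_right_gt.
have g_lt : g < e ^+ 2 / (K * H z0 + 1) by near: g; exact: nbhs_right_lt.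
rewrite -(@ltr_pXn2r _ 2) ?nnegrE ?(ltW e_gt0) //.
apply: le_lt_trans (dist_le g g_gt0) _.
move: g_lt; rewrite ltr_pdivlMr ?ltr_wpDl //; nra.
Unshelve. all: by end_near.
Qed.

End QuadraticGrowth.

Lemma mx_norm_le (R : realDomainType) m k (M : 'M[R]_(m, k)) b :
  0 <= b -> (forall i j, `|M i j| <= b) -> `|M| <= b.
Proof. by move=> b_ge0 Mb; rewrite [`|M|]mx_normrE; apply: bigmax_le. Qed.

Lemma pair_mx_norm_sqr_le (R : realType) m1 k1 m2 k2
    (x : 'M[R]_(m1, k1) * 'M[R]_(m2, k2)) b :
  0 <= b -> (forall i j, x.1 i j ^+ 2 <= b) -> (forall i j, x.2 i j ^+ 2 <= b) ->
  `|x| ^+ 2 <= b.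
Proof.
move=> b_ge0 x1b x2b.
have entry_le (y : R) : y ^+ 2 <= b -> `|y| <= Num.sqrt b.
  by rewrite -sqrtr_sqr; apply: ler_wsqrtr.
have : `|x| <= Num.sqrt b.
  by rewrite prod_normE ge_max !mx_norm_le ?sqrtr_ge0 // => i j; apply: entry_le.
by rewrite -(@ler_pXn2r _ 2) ?nnegrE ?sqrtr_ge0 // sqr_sqrtr.
Qed.

Section Model.
Variables (R : realType) (n : nat) (sigma : R) (c gam nu rho : 'I_n -> R).
Hypotheses (n_gt0 : (0 < n)%N) (sigma_gt0 : 0 < sigma).
Hypotheses (c_gt0 : forall i, 0 < c i) (gam_gt0 : forall i, 0 < gam i).
Hypotheses (nu_gt0 : forall i, 0 < nu i) (rho_bound : forall i, -1 < rho i < 1).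

Local Notation sn := (Num.sqrt (n%:R : R)).

Lemma sqrt_n_gt0 : 0 < sn.
Proof. by rewrite sqrtr_gt0 ltr0n. Qed.

Lemma sqr_sqrt_n : sn ^+ 2 = n%:R.
Proof. by rewrite sqr_sqrtr ?ler0n. Qed.

Lemma rho_sqr_lt1 i : rho i ^+ 2 < 1.
Proof. by have /andP[? ?] := rho_bound i; nra. Qed.

Lemma sum_rho_sqr_lt : \sum_(j < n) rho j ^+ 2 < n%:R.
Proof.
rewrite -[n in n%:R]card_ord -sumr_const; apply: ltr_sum => [|j _].
  by apply/hasP; exists (Ordinal n_gt0); rewrite ?mem_index_enum.
exact: rho_sqr_lt1.
Qed.

Definition row_quad i (d : 'I_n -> R) (e : R) : R :=
  d i ^+ 2 / (2 * c i) + gam i / 2 * \sum_(j < n) nu j ^+ 2 * d j ^+ 2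
  + gam i * sigma ^+ 2 / 2 * e ^+ 2
  + gam i * sigma / sn * e * \sum_(j < n) rho j * nu j * d j.

Definition penalty (zQ : 'M[R]_n) (zS : 'cV[R]_n) : R :=
  let sumS := \sum_(j < n) zS j 0 in
  (2 * n%:R ^+ 2)^-1 * \sum_(i < n)
      ( (nu i - nu i * \sum_(j < n) zQ j i - rho i * sigma / sn * sumS) ^+ 2
      + (1 - rho i ^+ 2) * sigma ^+ 2 / n%:R * sumS ^+ 2 ).

Lemma fobj0E zQ zS :
  fobj sigma 0 c gam nu rho zQ zS =
  - n%:R^-1 * \sum_(i < n) (row_quad i (zQ i) (zS i 0) - zQ i i / c i).
Proof. by rewrite /fobj !mul0r subr0. Qed.

Lemma fobj_penaltyE gP zQ zS :
  fobj sigma gP c gam nu rho zQ zS = fobj sigma 0 c gam nu rho zQ zS - gP * penalty zQ zS.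
Proof. by rewrite /fobj /penalty; ring. Qed.

Lemma penalty_ge0 zQ zS : 0 <= penalty zQ zS.
Proof.
rewrite /penalty mulr_ge0 ?invr_ge0 ?mulr_ge0 ?exprn_ge0 ?ler0n //.
apply: sumr_ge0 => i _; rewrite addr_ge0 ?sqr_ge0 // mulr_ge0 ?sqr_ge0 //.
by rewrite mulr_ge0 ?invr_ge0 ?ler0n // mulr_ge0 ?sqr_ge0 // subr_ge0 ltW ?rho_sqr_lt1.
Qed.

(* The hypotheses say that the partial derivatives of [row_quad i z s - z i / c i]
   in [z j] (j != i), in [z i] and in [s] vanish. *)
Lemma row_quad_sub_critical i (y z : 'I_n -> R) (t s : R) :
  (forall j, j != i ->
     gam i * nu j ^+ 2 * z j + gam i * sigma / sn * s * (rho j * nu j) = 0) ->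
  gam i * nu i ^+ 2 * z i + gam i * sigma / sn * s * (rho i * nu i) = (1 - z i) / c i ->
  gam i * sigma / sn * \sum_(j < n) rho j * nu j * z j + gam i * sigma ^+ 2 * s = 0 ->
  (row_quad i y t - y i / c i) - (row_quad i z s - z i / c i) =
  row_quad i (fun j => y j - z j) (t - s).
Proof.
move=> crit_off crit_diag crit_s.
have sum_nu : \sum_(j < n) nu j ^+ 2 * y j ^+ 2 = \sum_(j < n) nu j ^+ 2 * z j ^+ 2
    + 2 * \sum_(j < n) nu j ^+ 2 * z j * (y j - z j)
    + \sum_(j < n) nu j ^+ 2 * (y j - z j) ^+ 2.
  by rewrite mulr_sumr -!big_split; apply: eq_bigr => j _ /=; ring.
have sum_rho : \sum_(j < n) rho j * nu j * y j =
    \sum_(j < n) rho j * nu j * z j + \sum_(j < n) rho j * nu j * (y j - z j).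
  by rewrite -big_split; apply: eq_bigr => j _ /=; ring.
have crit_q : gam i * \sum_(j < n) nu j ^+ 2 * z j * (y j - z j)
    + gam i * sigma / sn * s * \sum_(j < n) rho j * nu j * (y j - z j)
    = (1 - z i) / c i * (y i - z i).
  rewrite !mulr_sumr -big_split (bigD1 i) //= big1 ?addr0 => [|j /crit_off crit_j].
    by rewrite -crit_diag; ring.
  by rewrite -[RHS](mul0r (y j - z j)) -crit_j; ring.
apply/eqP; rewrite -subr_eq0; apply/eqP.
transitivity (gam i * \sum_(j < n) nu j ^+ 2 * z j * (y j - z j)
    + gam i * sigma / sn * s * \sum_(j < n) rho j * nu j * (y j - z j)
    - (1 - z i) / c i * (y i - z i)
    + (t - s) * (gam i * sigma / sn * \sum_(j < n) rho j * nu j * z j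
                 + gam i * sigma ^+ 2 * s)).
  by rewrite /row_quad sum_nu sum_rho; field; rewrite !gt_eqF ?sqrt_n_gt0.
by rewrite crit_q crit_s subrr mulr0 addr0.
Qed.

Definition Acoef i := gam i + 1 / (c i * nu i ^+ 2).

Definition pi_coef i :=
  \sum_(j < n) rho j ^+ 2 - rho i ^+ 2 + gam i / Acoef i * rho i ^+ 2.

Definition s_opt i :=
  - (sn / sigma) * (rho i / (Acoef i * c i * nu i * (n%:R - pi_coef i))).

Definition q_opt i j :=
  if j == i then (Acoef i)^-1 * (1 / (c i * nu i) - gam i * sigma / sn * rho i * s_opt i)
  else - (sigma / sn) * s_opt i * rho j.

Definition zQ_opt : 'M[R]_n := \matrix_(i, j) (q_opt i j / nu j).

Definition zS_opt : 'cV[R]_n := \col_i s_opt i.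

Lemma Acoef_gt0 i : 0 < Acoef i.
Proof. by rewrite addr_gt0 // divr_gt0 // mulr_gt0 // exprn_gt0. Qed.

Lemma pi_coef_bounds i : 0 <= pi_coef i < n%:R.
Proof.
have gam_le_A : gam i / Acoef i <= 1.
  by rewrite ler_pdivrMr ?Acoef_gt0 // mul1r lerDl divr_ge0 // ltW // mulr_gt0 // exprn_gt0.
have gam_A_ge0 : 0 <= gam i / Acoef i by rewrite divr_ge0 // ltW ?Acoef_gt0.
have rho_i_le : rho i ^+ 2 <= \sum_(j < n) rho j ^+ 2.
  by rewrite (bigD1 i) //= lerDl sumr_ge0 // => j _; apply: sqr_ge0.
have := sum_rho_sqr_lt; have := sqr_ge0 (rho i).
by rewrite /pi_coef; nra.
Qed.

Lemma zQ_opt_critical_offdiag i j : j != i ->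
  gam i * nu j ^+ 2 * zQ_opt i j + gam i * sigma / sn * zS_opt i 0 * (rho j * nu j) = 0.
Proof.
move=> ji; rewrite !mxE /q_opt (negPf ji).
by field; rewrite !gt_eqF ?sqrt_n_gt0.
Qed.

Lemma zQ_opt_critical_diag i :
  gam i * nu i ^+ 2 * zQ_opt i i + gam i * sigma / sn * zS_opt i 0 * (rho i * nu i) =
  (1 - zQ_opt i i) / c i.
Proof.
rewrite !mxE /q_opt eqxx.
have -> : gam i = Acoef i - 1 / (c i * nu i ^+ 2) by rewrite /Acoef; ring.
by field; rewrite !gt_eqF ?sqrt_n_gt0 ?Acoef_gt0.
Qed.

Lemma zS_opt_critical i :
  gam i * sigma / sn * \sum_(j < n) rho j * nu j * zQ_opt i j
  + gam i * sigma ^+ 2 * zS_opt i 0 = 0.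
Proof.
have off_diag : \sum_(j < n | j != i) rho j * nu j * zQ_opt i j =
    - (sigma / sn) * s_opt i * (pi_coef i - gam i / Acoef i * rho i ^+ 2).
  have -> : pi_coef i - gam i / Acoef i * rho i ^+ 2 = \sum_(j < n | j != i) rho j ^+ 2.
    by rewrite /pi_coef (bigD1 i) //=; ring.
  rewrite mulr_sumr; apply: eq_bigr => j ji; rewrite !mxE /q_opt (negPf ji).
  by field; rewrite !gt_eqF ?sqrt_n_gt0.
have /andP[_ pi_lt] := pi_coef_bounds i.
rewrite (bigD1 i) //= off_diag !mxE /q_opt eqxx /s_opt.
move: (pi_coef i) pi_lt => p.
have := sqr_sqrt_n; have := sqrt_n_gt0; move: sn => r r_gt0 <- p_lt.
by field; rewrite !gt_eqF ?Acoef_gt0 ?subr_gt0.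
Qed.

Definition kappa i := gam i * sigma ^+ 2 / 2 * (1 - (\sum_(j < n) rho j ^+ 2) / n%:R).

Lemma kappa_gt0 i : 0 < kappa i.
Proof.
rewrite !mulr_gt0 ?exprn_gt0 ?invr_gt0 // subr_gt0.
by rewrite ltr_pdivrMr ?ltr0n // mul1r sum_rho_sqr_lt.
Qed.

Lemma row_quad_sqrE i d e :
  row_quad i d e = d i ^+ 2 / (2 * c i)
    + gam i / 2 * \sum_(j < n) (nu j * d j + sigma / sn * e * rho j) ^+ 2
    + kappa i * e ^+ 2.
Proof.
have -> : \sum_(j < n) (nu j * d j + sigma / sn * e * rho j) ^+ 2 =
    \sum_(j < n) nu j ^+ 2 * d j ^+ 2 + 2 * (sigma / sn * e) * \sum_(j < n) rho j * nu j * d j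
    + (sigma / sn * e) ^+ 2 * \sum_(j < n) rho j ^+ 2.
  by rewrite !mulr_sumr -!big_split; apply: eq_bigr => j _ /=; ring.
rewrite /row_quad /kappa.
have := sqr_sqrt_n; have := sqrt_n_gt0; move: sn => r r_gt0 <-.
by field; rewrite !gt_eqF.
Qed.

Lemma row_quad_ge_kappa i d e : kappa i * e ^+ 2 <= row_quad i d e.
Proof.
rewrite row_quad_sqrE lerDr addr_ge0 //.
  by rewrite divr_ge0 ?sqr_ge0 // mulr_ge0 // ltW.
apply: mulr_ge0; first by rewrite divr_ge0 // ltW.
by apply: sumr_ge0 => j _; apply: sqr_ge0.
Qed.

Definition row_const i := 4 / gam i + 2 * sigma ^+ 2 / (n%:R * kappa i).

Lemma row_quad_ge_entry i j d e : (nu j * d j) ^+ 2 <= row_const i * row_quad i d e.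
Proof.
set u := nu j * d j + sigma / sn * e * rho j.
set Q := row_quad i d e.
have u_le : gam i / 2 * u ^+ 2 <= Q.
  have : u ^+ 2 <= \sum_(k < n) (nu k * d k + sigma / sn * e * rho k) ^+ 2.
    by rewrite (bigD1 j) //= lerDl sumr_ge0 // => k _; apply: sqr_ge0.
  have gam2_ge0 : 0 <= gam i / 2 by rewrite divr_ge0 ?ltW.
  move/(ler_wpM2l gam2_ge0).
  have : 0 <= d i ^+ 2 / (2 * c i) by rewrite divr_ge0 ?sqr_ge0 // mulr_ge0 ?ltW.
  have : 0 <= kappa i * e ^+ 2 by rewrite mulr_ge0 ?sqr_ge0 ?ltW ?kappa_gt0.
  rewrite /Q row_quad_sqrE; lra.
have n_pos : (0 : R) < n%:R by rewrite ltr0n.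
set a := sigma / sn * rho j.
have a_le : a ^+ 2 <= sigma ^+ 2 / n%:R.
  by rewrite exprMn expr_div_n sqr_sqrt_n ger_pMr ?divr_gt0 ?exprn_gt0 // ltW ?rho_sqr_lt1.
have split_sq : (nu j * d j) ^+ 2 <= 2 * u ^+ 2 + 2 * (a ^+ 2 * e ^+ 2).
  rewrite -subr_ge0 (_ : _ - _ = (u + a * e) ^+ 2) ?sqr_ge0 // /u /a; ring.
have u_term : 2 * u ^+ 2 <= 4 / gam i * Q.
  rewrite (_ : 2 * u ^+ 2 = 4 / gam i * (gam i / 2 * u ^+ 2)); last by field; rewrite gt_eqF.
  by apply: ler_wpM2l u_le; rewrite divr_ge0 // ltW.
have e_term : 2 * (a ^+ 2 * e ^+ 2) <= 2 * sigma ^+ 2 / (n%:R * kappa i) * Q.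
  apply: (@le_trans _ _ (2 * (sigma ^+ 2 / n%:R * e ^+ 2))).
    by apply: ler_wpM2l => //; apply: ler_wpM2r a_le; apply: sqr_ge0.
  rewrite (_ : 2 * (_ * e ^+ 2) = 2 * sigma ^+ 2 / (n%:R * kappa i) * (kappa i * e ^+ 2));
    last by field; rewrite !gt_eqF ?kappa_gt0.
  apply: ler_wpM2l (row_quad_ge_kappa i d e).
  apply: divr_ge0; first by rewrite mulr_ge0 ?sqr_ge0.
  exact: mulr_ge0 (ler0n _ _) (ltW (kappa_gt0 i)).
rewrite /row_const mulrDl; lra.
Qed.

Lemma fobj0_gap yQ yS :
  fobj sigma 0 c gam nu rho zQ_opt zS_opt - fobj sigma 0 c gam nu rho yQ yS =
  n%:R^-1 * \sum_(i < n) row_quad i (fun j => yQ i j - zQ_opt i j) (yS i 0 - zS_opt i 0).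
Proof.
rewrite !fobj0E !mulNr opprK addrC -mulrBr -sumrB; congr (_ * _).
apply: eq_bigr => i _; apply: row_quad_sub_critical.
- exact: zQ_opt_critical_offdiag.
- exact: zQ_opt_critical_diag.
- exact: zS_opt_critical.
Qed.

Definition growth_const : R :=
  n%:R * \big[Num.max/0]_(ij : 'I_n * 'I_n)
           Num.max (kappa ij.1)^-1 (row_const ij.1 / nu ij.2 ^+ 2).

Lemma growth_const_gt0 : 0 < growth_const.
Proof.
set i0 := Ordinal n_gt0.
rewrite mulr_gt0 ?ltr0n // (lt_le_trans _ (le_bigmax _ _ (i0, i0))) //=.
by rewrite lt_max invr_gt0 kappa_gt0.
Qed.

Lemma fobj0_growth (y : 'M[R]_n * 'cV[R]_n) :
  `|y - (zQ_opt, zS_opt)| ^+ 2 <=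
  growth_const * (fobj sigma 0 c gam nu rho zQ_opt zS_opt - fobj sigma 0 c gam nu rho y.1 y.2).
Proof.
rewrite fobj0_gap /growth_const.
set Q := fun i => row_quad i (fun j => y.1 i j - zQ_opt i j) (y.2 i 0 - zS_opt i 0).
set M := \big[Num.max/0]_(ij : 'I_n * 'I_n) _.
have Q_ge0 i : 0 <= Q i.
  exact: le_trans (mulr_ge0 (ltW (kappa_gt0 i)) (sqr_ge0 _)) (row_quad_ge_kappa _ _ _).
have M_gt0 : 0 < M by move: growth_const_gt0; rewrite pmulr_rgt0 ?ltr0n.
have kappa_le i : (kappa i)^-1 <= M.
  by apply: le_trans (le_bigmax _ _ (i, i)); rewrite le_max lexx.
have row_const_le i j : row_const i / nu j ^+ 2 <= M.
  by apply: le_trans (le_bigmax _ _ (i, j)); rewrite le_max lexx orbT.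
have Q_le i : M * Q i <= M * \sum_(k < n) Q k.
  rewrite ler_pM2l // (bigD1 i) //= lerDl.
  by apply: sumr_ge0 => k _; apply: Q_ge0.
rewrite (_ : _ * (_ * _) = M * \sum_(i < n) Q i); last by field; rewrite gt_eqF ?ltr0n.
apply: pair_mx_norm_sqr_le => [|i j|i j] /=.
- exact: mulr_ge0 (ltW M_gt0) (sumr_ge0 _ (fun i _ => Q_ge0 i)).
- rewrite 2!mxE; apply: le_trans (Q_le i).
  apply: le_trans (ler_wpM2r (Q_ge0 i) (row_const_le i j)).
  rewrite mulrAC ler_pdivlMr ?exprn_gt0 // mulrC -exprMn.
  exact: row_quad_ge_entry.
- rewrite 2!mxE (ord1 j); apply: le_trans (Q_le i).
  apply: le_trans (ler_wpM2r (Q_ge0 i) (kappa_le i)).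
  rewrite mulrC ler_pdivlMr ?kappa_gt0 // mulrC.
  exact: row_quad_ge_kappa.
Qed.

Lemma nu_zQ_opt i j : nu j * zQ_opt i j = q_opt i j.
Proof. by rewrite mxE mulrC divfK ?gt_eqF. Qed.

Lemma zS_optE i : zS_opt i 0 = s_opt i.
Proof. by rewrite mxE. Qed.

Lemma s_opt_den_gt0 i : 0 < Acoef i * c i * nu i * (n%:R - pi_coef i).
Proof.
have /andP[_ pi_lt] := pi_coef_bounds i.
by rewrite !mulr_gt0 ?Acoef_gt0 // subr_gt0.
Qed.

Lemma zS_opt_sg i : Num.sg (zS_opt i 0) = - Num.sg (rho i).
Proof.
rewrite zS_optE /s_opt mulNr sgrN sgrM gtr0_sg ?divr_gt0 ?sqrt_n_gt0 // mul1r.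
by rewrite sgrM (@gtr0_sg _ (_^-1)) ?mulr1 // invr_gt0 s_opt_den_gt0.
Qed.

Lemma zQ_opt_diag_gt0 i : 0 < zQ_opt i i.
Proof.
rewrite -(pmulr_rgt0 _ (nu_gt0 i)) nu_zQ_opt /q_opt eqxx /s_opt.
have den_gt0 := s_opt_den_gt0 i; move: (Acoef i * _ * _ * _) den_gt0 => den den_gt0.
rewrite mulr_gt0 ?invr_gt0 ?Acoef_gt0 //.
rewrite (_ : _ - _ = 1 / (c i * nu i) + gam i * rho i ^+ 2 / den);
  last by field; rewrite !gt_eqF ?sqrt_n_gt0.
have : 0 < 1 / (c i * nu i) by rewrite divr_gt0 // mulr_gt0.
have : 0 <= gam i * rho i ^+ 2 / den.
  by rewrite divr_ge0 ?(ltW den_gt0) // mulr_ge0 ?sqr_ge0 // ltW.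
lra.
Qed.

Lemma zQ_opt_offdiag_sg i j : j != i -> Num.sg (zQ_opt i j) = Num.sg (rho i * rho j).
Proof.
move=> ji; rewrite -[LHS]mul1r -(gtr0_sg (nu_gt0 j)) -sgrM nu_zQ_opt /q_opt (negPf ji) /s_opt.
have den_gt0 := s_opt_den_gt0 i; move: (Acoef i * _ * _ * _) den_gt0 => den den_gt0.
rewrite (_ : - (sigma / sn) * (- (sn / sigma) * (rho i / den)) * rho j = rho i * rho j / den);
  last by field; rewrite !gt_eqF ?sqrt_n_gt0.
by rewrite sgrM (@gtr0_sg _ den^-1) ?mulr1 // invr_gt0.
Qed.

End Model.

Theorem mainTheorem11 (R : realType) (n : nat) (sigma : R)
  (c gam nu rho : 'I_n -> R) :
  (0 < n)%N -> 0 < sigma ->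
  (forall i, 0 < c i) -> (forall i, 0 < gam i) -> (forall i, 0 < nu i) ->
  (forall i, -1 < rho i < 1) ->
  exists (zQ0 : 'M[R]_n) (zS0 : 'cV[R]_n),
    [/\ is_maximiser (fobj sigma 0 c gam nu rho) zQ0 zS0,
        (forall yQ yS, is_maximiser (fobj sigma 0 c gam nu rho) yQ yS ->
           yQ = zQ0 /\ yS = zS0),
        (forall z : R -> 'M[R]_n * 'cV[R]_n,
           (forall gP, 0 < gP -> is_maximiser (fobj sigma gP c gam nu rho) (z gP).1 (z gP).2) ->
           z @ 0^'+ --> (zQ0, zS0)),
        (let sn := Num.sqrt (n%:R : R) in
         let s0 := fun i => zS0 i 0 in
         let q0 := fun i j => nu j * zQ0 i j in
         let A := fun i => gam i + 1 / (c i * (nu i) ^+ 2) in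
         let pi_ := fun i => \sum_(j < n) (rho j) ^+ 2 - (rho i) ^+ 2
                             + gam i / A i * (rho i) ^+ 2 in
         forall i : 'I_n,
           [/\ forall j : 'I_n, j != i -> q0 i j = - (sigma / sn) * s0 i * rho j,
               q0 i i = (A i)^-1 * (1 / (c i * nu i) - gam i * sigma / sn * rho i * s0 i),
               s0 i = - (sn / sigma) * (rho i / (A i * c i * nu i * (n%:R - pi_ i))) &
               0 <= pi_ i < n%:R])
    &
        forall i : 'I_n,
          [/\ Num.sg (zS0 i 0) = - Num.sg (rho i),
              0 < zQ0 i i &
              forall j : 'I_n, j != i -> Num.sg (zQ0 i j) = Num.sg (rho i * rho j)]].
Proof.
move=> n_gt0 sigma_gt0 c_gt0 gam_gt0 nu_gt0 rho_bound.
exists (zQ_opt sigma c gam nu rho), (zS_opt sigma c gam nu rho).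
have K_gt0 := growth_const_gt0 nu n_gt0 sigma_gt0 gam_gt0 rho_bound.
have growth := fobj0_growth n_gt0 sigma_gt0 c_gt0 gam_gt0 nu_gt0 rho_bound.
split.
- by move=> yQ yS; apply: (growth_le K_gt0 growth (yQ, yS)).
- move=> yQ yS y_max.
  have opt_eq := growth_eq K_gt0 growth (y := (yQ, yS)) (y_max _ _).
  by split; [exact: (congr1 fst opt_eq) | exact: (congr1 snd opt_eq)].
- move=> z z_max.
  apply: (penalized_maximisers_cvg K_gt0 growth (H := fun y => penalty sigma nu rho y.1 y.2)).
    by move=> y; apply: penalty_ge0.
  by move=> g g_gt0 y; have := z_max g g_gt0 y.1 y.2; rewrite !(fobj_penaltyE _ _ _ _ _ g).
- move=> sn s0 q0 A pi_ i; rewrite /q0 /s0 /= zS_optE.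
  split=> [j ji|||]; rewrite ?(nu_zQ_opt _ _ _ _ nu_gt0) /q_opt ?eqxx //.
  + by rewrite (negPf ji).
  + exact: pi_coef_bounds.
- move=> i; split.
  + exact: zS_opt_sg.
  + exact: zQ_opt_diag_gt0.
  + exact: zQ_opt_offdiag_sg.
Qed.
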